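(* Let $p$ be an odd prime and $P$ a finite $p$-group of class $2$ and exponent $p$. (i) There are subgroups $Q$ and $A$ of $P$ such that $Z(Q)=Q'=P'$, $A\le Z(P)$ and $P=Q\times A$. (ii) Let $Q,R\le P$ satisfy $Z(Q)=Q'=P'=R'=Z(R)$ and $P=QZ(P)=RZ(P)$. If $A\le Z(P)$ is such that $P=Q\times A$, then also $P=R\times A$. Furthermore, there is an upper central automorphism of $P$ sending $Q$ to $R$ and acting as the identity on $Z(P)$.
   Context: An automorphism $\varphi$ of $P$ is upper central if $Z(P)x\varphi=Z(P)x$ for all $x\in P$. $P'$ denotes the commutator subgroup and $Z(\cdot)$ the center. *)

From mathcomp Require Import all_boot all_fingroup all_solvable.
Set Implicit Arguments. Unset Strict Implicit. Unset Printing Implicit Defensive.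
Local Open Scope group_scope.

Definition upper_central (gT : finGroupType) (P : {set gT}) (phi : {perm gT}) :=
  forall x, x \in P -> 'Z(P) :* phi x = 'Z(P) :* x.

From mathcomp Require Import all_boot all_fingroup all_solvable.
Set Implicit Arguments. Unset Strict Implicit. Unset Printing Implicit Defensive.
Local Open Scope group_scope.

(* Since P' <= Z(P) and P has exponent p, both Z(P) and P/P' are elementary
   abelian, hence every subgroup has a complement in them.  Taking A a
   complement to P' in Z(P), and Q the preimage of a complement to AP'/P' in
   P/P', gives P = Q x A, and then Z(Q) x A = Z(P) = P' x A forces Z(Q) = P'.
   For (ii), Q and R both meet Z(P) in P', so |Q| = |R| and P = R x A.  The
   automorphism sends q a (q in Q, a in A) to r a, where r is the R-component
   of q in P = R x A: it moves every element by a factor in A <= Z(P), fixes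
   Z(P) = P' A pointwise, and maps Q onto R. *)

Lemma dprod_cancel_sub (gT : finGroupType) (B C : {set gT}) (A G : {group gT}) :
  B \subset C -> B \x A = G -> C \x A = G -> B :=: C.
Proof.
move=> sBC /dprod_card dB /dprod_card dC.
by apply/eqP; rewrite eqEcard sBC -(leq_pmul2r (cardG_gt0 A)) dB dC leqnn.
Qed.

Section CentralComplement.

Variables (gT : finGroupType) (P : {group gT}).

Lemma coset_morphpre_dprod (N A : {group gT}) (Qb : {group coset_of N}) :
    N <| P -> A \subset 'Z(P) -> N :&: A = 1 ->
    Qb \in [complements to A / N in P / N] ->
  coset N @*^-1 Qb \x A = P.
Proof.
move=> nsNP sAZ tiNA /complP[tiAQb defPb].
have nNP : P \subset 'N(N) := normal_norm nsNP.
have sAP : A \subset P := subset_trans sAZ (center_sub P).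
have sQP : coset N @*^-1 Qb \subset P.
  by rewrite -(quotientGK nsNP) morphpreS // -defPb mulG_subr.
have cQA : A \subset 'C(coset N @*^-1 Qb).
  by rewrite centsC (subset_trans sQP) // centsC (subset_trans sAZ) ?subsetIr.
have tiQA : coset N @*^-1 Qb :&: A = 1.
  apply/trivgP/subsetP => x /setIP[/morphpreP[Nx Qbx] Ax].
  have : coset N x \in A / N :&: Qb by rewrite inE mem_quotient.
  rewrite tiAQb => /set1P/(coset_idr Nx) xN.
  by rewrite -tiNA inE xN.
rewrite dprodE //; apply/eqP; rewrite eqEsubset mulG_subG sQP sAP /=.
rewrite -(centC cQA); apply/subsetP => x Px.
have : coset N x \in A / N * Qb by rewrite defPb mem_quotient.
case/mulsgP => _ qb /morphimP[a Na Aa ->] Qbqb def_x.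
have Nx := subsetP nNP x Px.
rewrite -(mulKVg a x) mem_mulg // mem_morphpre ?groupM ?groupV //.
by rewrite morphM ?groupV // morphV //= def_x mulKg.
Qed.

Lemma center_dprod_derived_compl (Q A : {group gT}) :
    P^`(1) \subset 'Z(P) -> A \subset 'Z(P) ->
    P^`(1) \x A = 'Z(P) -> Q \x A = P ->
  'Z(Q) = Q^`(1) /\ Q^`(1) = P^`(1).
Proof.
move=> sP'Z sAZ dP'A dQA.
have cAA : abelian A := abelianS sAZ (center_abelian P).
have sQP : Q \subset P by rewrite -(dprodW dQA) mulG_subl.
have Q'P' : Q^`(1) = P^`(1).
  by have := der_dprod 1 dQA; rewrite (derG1P cAA) dprodg1.
have dZQA : 'Z(Q) \x A = 'Z(P).
  by have := center_dprod dQA; rewrite (center_idP cAA).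
split=> //; rewrite Q'P'; symmetry; apply: dprod_cancel_sub dP'A dZQA.
rewrite subsetI; apply/andP; split; first by rewrite -Q'P' der_sub.
exact: subset_trans sP'Z (subset_trans (subsetIr _ _) (centS sQP)).
Qed.

Lemma exists_central_dprod_compl (p : nat) :
    prime p -> P^`(1) \subset 'Z(P) -> exponent P %| p ->
  exists Q A : {group gT},
    [/\ Q \subset P, 'Z(Q) = Q^`(1), Q^`(1) = P^`(1),
        A \subset 'Z(P) & Q \x A = P].
Proof.
move=> pr_p sP'Z expP.
have abelZ : p.-abelem 'Z(P).
  by rewrite abelemE // center_abelian (dvdn_trans (exponentS (center_sub P))).
have [A /complP[tiP'A defZ]] := splitsP (abelem_splits abelZ sP'Z).
have sAZ : A \subset 'Z(P) by rewrite -defZ mulG_subr.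
have abelPb : p.-abelem (P / P^`(1)).
  rewrite abelemE // sub_der1_abelian //.
  exact: dvdn_trans (exponent_quotient _ _) expP.
have sAbPb : A / P^`(1) \subset P / P^`(1).
  by rewrite quotientS // (subset_trans sAZ) ?center_sub.
have [Qb cplQb] := splitsP (abelem_splits abelPb sAbPb).
have dQA := coset_morphpre_dprod (der_normal 1 P) sAZ tiP'A cplQb.
have dP'A : P^`(1) \x A = 'Z(P).
  rewrite dprodE ?(subset_trans sAZ) // (subset_trans (subsetIr _ _)) //.
  exact/centS/der_sub.
have [ZQ Q'] := center_dprod_derived_compl sP'Z sAZ dP'A dQA.
exists (coset P^`(1) @*^-1 Qb)%G, A; split=> //.
by rewrite -[in X in _ \subset X](dprodW dQA) mulG_subl.
Qed.

End CentralComplement.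

Lemma setI_center_derived (gT : finGroupType) (P X : {group gT}) :
    X \subset P -> P^`(1) \subset 'Z(P) -> 'Z(X) = P^`(1) ->
  X :&: 'Z(P) = P^`(1).
Proof.
move=> sXP sP'Z ZX; apply/eqP; rewrite eqEsubset subsetI sP'Z -ZX subsetIl /=.
rewrite subsetI subsetIl andbT.
exact: subset_trans (subsetIr _ _) (subset_trans (subsetIr _ _) (centS sXP)).
Qed.

Lemma card_eq_mul_setI (gT : finGroupType) (Q R Z : {group gT}) :
  Q * Z = R * Z -> Q :&: Z = R :&: Z -> #|Q| = #|R|.
Proof.
move=> QZ_RZ tiQZ_RZ; apply/eqP; rewrite -(eqn_pmul2r (cardG_gt0 Z)).
by rewrite !mul_cardG QZ_RZ tiQZ_RZ.
Qed.

Lemma dprod_exchange (gT : finGroupType) (P Q R A : {group gT}) :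
    Q * 'Z(P) = R * 'Z(P) -> Q :&: 'Z(P) = R :&: 'Z(P) ->
    A \subset 'Z(P) -> Q \x A = P ->
  R \x A = P.
Proof.
move=> QZ_RZ QiZ_RiZ sAZ dQA; have [_ defQA cQA tiQA] := dprodP dQA.
have sZP : 'Z(P) \subset P := center_sub P.
have sRP : R \subset P.
  rewrite (subset_trans (mulG_subl 'Z(P) R)) // -QZ_RZ mulG_subG sZP.
  by rewrite -defQA mulG_subl.
have cRA : A \subset 'C(R).
  exact: subset_trans sAZ (subset_trans (subsetIr _ _) (centS sRP)).
have tiRA : R :&: A = 1.
  apply/trivgP; rewrite -tiQA subsetI subsetIr andbT.
  by rewrite (subset_trans (setIS R sAZ)) // -QiZ_RiZ subsetIl.
rewrite dprodE //; apply/eqP; rewrite eqEcard mulG_subG sRP.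
rewrite (subset_trans sAZ sZP) TI_cardMg // -(card_eq_mul_setI QZ_RZ QiZ_RiZ).
by rewrite -TI_cardMg // defQA leqnn.
Qed.

Section ExchangeAutomorphism.

Variables (gT : finGroupType) (P Q R A : {group gT}).
Hypotheses (dQA : Q \x A = P) (dRA : R \x A = P) (sAZ : A \subset 'Z(P)).

Definition exchange x := divgr R A x * remgr Q A x.

Let defQA : Q * A = P. Proof. exact: dprodW dQA. Qed.
Let defRA : R * A = P. Proof. exact: dprodW dRA. Qed.
Let sQP : Q \subset P. Proof. by rewrite -defQA mulG_subl. Qed.
Let cAP : A \subset 'C(P). Proof. exact: subset_trans sAZ (subsetIr _ _). Qed.

Let remQ_A x : x \in P -> remgr Q A x \in A.
Proof. by rewrite -defQA; apply: mem_remgr. Qed.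

Let remR_A x : x \in P -> remgr R A x \in A.
Proof. by rewrite -defRA; apply: mem_remgr. Qed.

Let divR_P x : x \in P -> divgr R A x \in P.
Proof.
by rewrite -defRA => RAx; rewrite (subsetP (mulG_subl A R)) ?mem_divgr.
Qed.

Lemma exchangeE x : exchange x = x * ((remgr R A x)^-1 * remgr Q A x).
Proof. by rewrite /exchange /divgr mulgA. Qed.

Lemma exchange_id x : x \in P -> divgr Q A x \in R -> exchange x = x.
Proof.
have [_ _ _ tiRA] := dprodP dRA.
move=> Px Rx; rewrite /exchange {1}(divgr_eq Q A x) divgrMid ?remQ_A //.
by rewrite -divgr_eq.
Qed.

Lemma exchangeM : {in P &, {morph exchange : x y / x * y}}.
Proof.
have cplR : A \in [complements to R in P] by apply/complP; case/dprodP: dRA.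
have cplQ : A \in [complements to Q in P] by apply/complP; case/dprodP: dQA.
have [nsQP _] := dprod_normal2 dQA.
have cRA : A \subset 'C(R).
  by rewrite (subset_trans cAP) // centS // -defRA mulG_subl.
move=> x y Px Py; rewrite /exchange (divgrM cplR cRA) ?(remgrM cplQ nsQP) //.
have := centsP cAP _ (remQ_A Px) _ (divR_P Py).
move: (remgr Q A x) (divgr R A y) (divgr R A x) (remgr Q A y) => r d d0 r0 crd.
by rewrite -!mulgA (mulgA d) -crd !mulgA.
Qed.

Canonical exchange_morphism := Morphism exchangeM.

Let exchange_A x : x \in P -> exchange x \in x *: A.
Proof.
by move=> Px; rewrite exchangeE mem_lcoset mulKg groupM ?groupV ?remR_A ?remQ_A.
Qed.

Lemma injm_exchange : 'injm exchange_morphism.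
Proof.
have [_ _ _ tiQA] := dprodP dQA.
apply/subsetP => x Kx; have Px := dom_ker Kx.
have /lcosetP[a Aa def_x1] := exchange_A Px.
move/(kerP _ Px): Kx => /= fx1.
have Ax : x \in A by rewrite -(mulgK a x) -def_x1 fx1 mul1g groupV.
have divQ_R : divgr Q A x \in R by rewrite -(mul1g x) divgrMid ?group1.
by rewrite inE -fx1 exchange_id.
Qed.

Lemma morphim_exchange : exchange_morphism @* P = P.
Proof.
apply/eqP; rewrite eqEcard card_injm ?injm_exchange // leqnn andbT.
apply/subsetP => _ /morphimP[x _ Px ->] /=.
have /lcosetP[a Aa ->] := exchange_A Px.
by rewrite groupM // (subsetP (subset_trans sAZ (center_sub P))).
Qed.

Lemma morphim_exchange_Q : exchange_morphism @* Q = R.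
Proof.
have cardQR : #|Q| = #|R|.
  apply/eqP; rewrite -(eqn_pmul2r (cardG_gt0 A)).
  by rewrite (dprod_card dQA) (dprod_card dRA).
apply/eqP; rewrite eqEcard card_injm ?injm_exchange // cardQR leqnn andbT.
apply/subsetP => _ /morphimP[x _ Qx ->] /=.
by rewrite /exchange remgr1 // mulg1 mem_divgr // defRA (subsetP sQP).
Qed.

Definition exchange_aut := aut injm_exchange morphim_exchange.

Lemma exchange_aut_Aut : exchange_aut \in Aut P.
Proof. exact: Aut_aut. Qed.

Lemma upper_central_exchange_aut : upper_central P exchange_aut.
Proof.
move=> x Px; rewrite autE //=.
have /lcosetP[a Aa ->] := exchange_A Px.
have Za : a \in 'Z(P) := subsetP sAZ a Aa.
by rewrite -(centsP cAP _ Aa _ Px) rcosetM rcoset_id.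
Qed.

Lemma exchange_aut_Q : exchange_aut @: Q = R.
Proof.
rewrite -morphim_exchange_Q morphimEsub //.
by apply: eq_in_imset => x Qx; rewrite autE // (subsetP sQP).
Qed.

Lemma exchange_aut_center :
  Q :&: 'Z(P) \subset R -> forall z, z \in 'Z(P) -> exchange_aut z = z.
Proof.
move=> sQZR z Zz; have Pz := subsetP (center_sub P) z Zz.
rewrite autE //= exchange_id // (subsetP sQZR) // inE mem_divgr ?defQA //=.
by rewrite /divgr groupM ?groupV // (subsetP sAZ) ?remQ_A.
Qed.

End ExchangeAutomorphism.

Theorem lemma2p3 (gT : finGroupType) (p : nat) (P : {group gT}) :
  prime p -> odd p -> p.-group P -> nil_class P = 2 -> exponent P = p ->
  (exists (Q A : {group gT}),
      [/\ Q \subset P, 'Z(Q) = Q^`(1), Q^`(1) = P^`(1),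
          A \subset 'Z(P) & Q \x A = P])
  /\
  (forall (Q R A : {group gT}),
      Q \subset P -> R \subset P ->
      'Z(Q) = Q^`(1) -> Q^`(1) = P^`(1) -> P^`(1) = R^`(1) -> R^`(1) = 'Z(R) ->
      Q * 'Z(P) = P -> R * 'Z(P) = P ->
      A \subset 'Z(P) -> Q \x A = P ->
      R \x A = P /\
      exists2 phi : {perm gT}, phi \in Aut P &
        [/\ upper_central P phi, phi @: Q = R &
            forall z, z \in 'Z(P) -> phi z = z]).
Proof.
move=> pr_p _ _ class2 expP.
have sP'Z : P^`(1) \subset 'Z(P) by rewrite -nil_class2 class2.
split; first by apply: exists_central_dprod_compl pr_p sP'Z _; rewrite expP.
move=> Q R A sQP sRP ZQ Q'P' P'R' R'Z QZ RZ sAZ dQA.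
have QZ_P' : Q :&: 'Z(P) = P^`(1) by apply: setI_center_derived; rewrite ?ZQ.
have RZ_P' : R :&: 'Z(P) = P^`(1) by apply: setI_center_derived; rewrite // -R'Z.
have dRA : R \x A = P by apply: dprod_exchange dQA; rewrite ?QZ ?RZ ?QZ_P' ?RZ_P'.
split=> //; exists (exchange_aut dQA dRA sAZ); first exact: exchange_aut_Aut.
split; [exact: upper_central_exchange_aut | exact: exchange_aut_Q |].
by apply: exchange_aut_center; rewrite QZ_P' -RZ_P' subsetIl.
Qed.
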